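(* Let $(\mathcal{S},\mathcal{R})$ be a complete positive presentation satisfying: (F$_r$) the closure of $\mathcal{S}$ under $r$-reversing is finite; (C) $\mathcal{R}$ contains no relation of the form $su=sv$ or $us=vs$ with $s\in\mathcal{S}$, $u,v\in\mathcal{S}^*$ and $u\neq v$; (E$_r$) there exists a set $\mathcal{S}'$ with $\mathcal{S}\subseteq\mathcal{S}'\subseteq\mathcal{S}^*$ such that for all $u,v\in\mathcal{S}'$ there exist $u',v'\in\mathcal{S}'$ satisfying $(uv')^{-1}(vu')\curvearrowright_r\varepsilon$. Then the group $\mathrm{Gr}(\mathcal{S};\mathcal{R})$ satisfies a quadratic isoperimetric inequality.
   Context: A positive presentation is a pair $(\mathcal{S},\mathcal{R})$ where $\mathcal{S}$ is a nonempty set of letters and $\mathcal{R}$ is a family of relations $u=v$, i.e. unordered pairs $\{u,v\}$ of nonempty words in the free monoid $\mathcal{S}^*$ (letters are regarded as length-one words). $\varepsilon$ denotes the empty word; $\equiv$ is the smallest congruence on $\mathcal{S}^*$ containing all pairs of $\mathcal{R}$. Let $\mathcal{S}^{-1}=\{s^{-1}:s\in\mathcal{S}\}$ be a disjoint copy of $\mathcal{S}$; $\equiv^{\pm}$ is the smallest congruence on $(\mathcal{S}\cup\mathcal{S}^{-1})^*$ containing all pairs of $\mathcal{R}$ and all pairs $\{ss^{-1},\varepsilon\}$, $\{s^{-1}s,\varepsilon\}$; $\mathrm{Gr}(\mathcal{S};\mathcal{R})=(\mathcal{S}\cup\mathcal{S}^{-1})^*/{\equiv^{\pm}}$. For $u\in\mathcal{S}^*$,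 $u^{-1}$ is obtained by reversing the order of the letters of $u$ and replacing each $s$ by $s^{-1}$. Right reversing: $\mathbf{w}\curvearrowright_r\mathbf{w}'$ (words on $\mathcal{S}\cup\mathcal{S}^{-1}$) if $\mathbf{w}'$ is obtained from $\mathbf{w}$ by finitely many steps, each deleting a subword $u^{-1}u$ ($u\in\mathcal{S}^*$ nonempty) or replacing a subword $u^{-1}v$ ($u,v\in\mathcal{S}^*$ nonempty) by $v'u'^{-1}$ where $uv'=vu'$ is a relation of $\mathcal{R}$. Left reversing: $\mathbf{w}\curvearrowright_l\mathbf{w}'$ if $\mathbf{w}'$ is obtained by finitely many steps, each deleting a subword $uu^{-1}$ ($u$ nonempty) or replacing a subword $uv^{-1}$ ($u,v$ nonempty) by $v'^{-1}u'$ where $v'u=u'v$ is a relation of $\mathcal{R}$. $(\mathcal{S},\mathcal{R})$ is $r$-complete if for all $u,v,u',v'\in\mathcal{S}^*$ with $uv'\equiv vu'$ there exist $u'',v'',w\in\mathcal{S}^*$ with $u^{-1}v\curvearrowright_r v''u''^{-1}$, $u'\equiv u''w$, $v'\equiv v''w$; it is $l$-complete if for all $u,v,u',v'$ with $v'u\equiv u'v$ there exist $u'',v'',w$ with $uv^{-1}\curvearrowright_l v''^{-1}u''$, $u'\equiv wu''$, $v'\equiv wv''$; it is complete if it is both. A subset $X\subseteq\mathcal{S}^*$ is closed under $r$-reversing if $u',v'\in X$ whenever $u,v\in X$ and $u^{-1}v\curvearrowright_r v'u'^{-1}$ with $u',v'\in\mathcal{S}^*$; the closure of $\mathcal{S}$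 under $r$-reversing is the smallest such subset containing $\mathcal{S}$. The group satisfies a quadratic isoperimetric inequality if there is a constant $C$ such that every word $\mathbf{w}$ of length $n$ on $\mathcal{S}\cup\mathcal{S}^{-1}$ with $\mathbf{w}\equiv^{\pm}\varepsilon$ can be transformed into $\varepsilon$ using at most $Cn^2$ applications of relations of $\mathcal{R}$ (together with free insertions/deletions of $ss^{-1}$, $s^{-1}s$). *)

From Stdlib Require Import List.
Import ListNotations.
Set Implicit Arguments.

Section Pres.
Variable S : Type.

Inductive sletter : Type := Pos : S -> sletter | Neg : S -> sletter.

Definition sword := list sletter.

Definition pos (u : list S) : sword := map Pos u.
Definition inv (u : list S) : sword := rev (map Neg u).

(* A family of relations: R u v means the relation u = v is in the family.
   Relations are unordered pairs, so we use the symmetric closure. *)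
Variable R : list S -> list S -> Prop.
Definition is_rel (u v : list S) : Prop := R u v \/ R v u.

Definition positive_relations : Prop :=
  forall u v, R u v -> u <> [] /\ v <> [].

Inductive pequiv : list S -> list S -> Prop :=
| pequiv_refl : forall u, pequiv u u
| pequiv_sym : forall u v, pequiv u v -> pequiv v u
| pequiv_trans : forall u v w, pequiv u v -> pequiv v w -> pequiv u w
| pequiv_rel : forall x y u v, is_rel u v -> pequiv (x ++ u ++ y) (x ++ v ++ y).

Inductive gequiv : sword -> sword -> Prop :=
| gequiv_refl : forall w, gequiv w w
| gequiv_sym : forall w w', gequiv w w' -> gequiv w' w
| gequiv_trans : forall w1 w2 w3, gequiv w1 w2 -> gequiv w2 w3 -> gequiv w1 w3
| gequiv_rel : forall x y u v, is_rel u v ->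
    gequiv (x ++ pos u ++ y) (x ++ pos v ++ y)
| gequiv_free1 : forall x y s, gequiv (x ++ [Pos s; Neg s] ++ y) (x ++ y)
| gequiv_free2 : forall x y s, gequiv (x ++ [Neg s; Pos s] ++ y) (x ++ y).

Inductive rrev_step : sword -> sword -> Prop :=
| rrev_del : forall x y u, u <> [] ->
    rrev_step (x ++ inv u ++ pos u ++ y) (x ++ y)
| rrev_sw : forall x y u v u' v', u <> [] -> v <> [] -> is_rel (u ++ v') (v ++ u') ->
    rrev_step (x ++ inv u ++ pos v ++ y) (x ++ pos v' ++ inv u' ++ y).

Inductive lrev_step : sword -> sword -> Prop :=
| lrev_del : forall x y u, u <> [] ->
    lrev_step (x ++ pos u ++ inv u ++ y) (x ++ y)
| lrev_sw : forall x y u v u' v', u <> [] -> v <> [] -> is_rel (v' ++ u) (u' ++ v) ->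
    lrev_step (x ++ pos u ++ inv v ++ y) (x ++ inv v' ++ pos u' ++ y).

Inductive rrev : sword -> sword -> Prop :=
| rrev_refl : forall w, rrev w w
| rrev_cons : forall w1 w2 w3, rrev_step w1 w2 -> rrev w2 w3 -> rrev w1 w3.

Inductive lrev : sword -> sword -> Prop :=
| lrev_refl : forall w, lrev w w
| lrev_cons : forall w1 w2 w3, lrev_step w1 w2 -> lrev w2 w3 -> lrev w1 w3.

Definition r_complete : Prop :=
  forall u v u' v', pequiv (u ++ v') (v ++ u') ->
  exists u'' v'' w, rrev (inv u ++ pos v) (pos v'' ++ inv u'') /\
    pequiv u' (u'' ++ w) /\ pequiv v' (v'' ++ w).

Definition l_complete : Prop :=
  forall u v u' v', pequiv (v' ++ u) (u' ++ v) ->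
  exists u'' v'' w, lrev (pos u ++ inv v) (inv v'' ++ pos u'') /\
    pequiv u' (w ++ u'') /\ pequiv v' (w ++ v'').

Definition complete : Prop := r_complete /\ l_complete.

Inductive rclosure : list S -> Prop :=
| rclos_letter : forall s, rclosure [s]
| rclos_num : forall u v u' v', rclosure u -> rclosure v ->
    rrev (inv u ++ pos v) (pos v' ++ inv u') -> rclosure u'
| rclos_den : forall u v u' v', rclosure u -> rclosure v ->
    rrev (inv u ++ pos v) (pos v' ++ inv u') -> rclosure v'.

Definition cond_Fr : Prop := exists l : list (list S), forall u, rclosure u -> In u l.

Definition cond_C : Prop :=
  forall (s : S) (u v : list S), u <> v ->
    ~ is_rel (s :: u) (s :: v) /\ ~ is_rel (u ++ [s]) (v ++ [s]).

Definition cond_Er : Prop :=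
  exists S' : list S -> Prop, (forall s, S' [s]) /\
    forall u v, S' u -> S' v ->
      exists u' v', S' u' /\ S' v' /\ rrev (inv (u ++ v') ++ pos (v ++ u')) [].

Inductive derives : nat -> sword -> sword -> Prop :=
| der_refl : forall w, derives 0 w w
| der_free_del1 : forall k x y s w, derives k (x ++ y) w ->
    derives k (x ++ [Pos s; Neg s] ++ y) w
| der_free_del2 : forall k x y s w, derives k (x ++ y) w ->
    derives k (x ++ [Neg s; Pos s] ++ y) w
| der_free_ins1 : forall k x y s w, derives k (x ++ [Pos s; Neg s] ++ y) w ->
    derives k (x ++ y) w
| der_free_ins2 : forall k x y s w, derives k (x ++ [Neg s; Pos s] ++ y) w ->
    derives k (x ++ y) w
| der_rel : forall k x y u v w, is_rel u v -> derives k (x ++ pos v ++ y) w ->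
    derives (Datatypes.S k) (x ++ pos u ++ y) w.

Definition quadratic_isoperimetric : Prop :=
  exists C : nat, forall w : sword, gequiv w [] ->
    exists k, derives k w [] /\ k <= C * (length w * length w).

End Pres.

(* Completeness and (C) make the monoid cancellative, and (E_r) gives common
   right multiples, so by Ore's theorem the monoid embeds in the group: reading a
   word w with w ≡± ε as a fraction v u^-1 forces v ≡ u.  By (F_r) the reversing
   of any two elements of the (finite) closure of S takes at most N steps, and
   reversing a product of closure elements tiles a grid of such cells.  Hence w
   reverses in at most N|w|^2 steps to v u^-1 with u, v products of at most |w|
   closure elements, and since u ≡ v, u^-1 v reverses to ε in at most N|w|^2
   further steps.  A reversing step costs at most one application of a relation,
   so w is transformed into ε with at most 2N|w|^2 of them. *)

From Stdlib Require Import List Lia Classical PeanoNat.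
Import ListNotations.
Set Implicit Arguments.

Section Words.
Variable S : Type.
Implicit Types (a b c d u v : list S) (w : sword S).

Lemma pos_app u v : pos (u ++ v) = pos u ++ pos v.
Proof. apply map_app. Qed.

Lemma inv_app u v : inv (u ++ v) = inv v ++ inv u.
Proof. unfold inv. now rewrite map_app, rev_app_distr. Qed.

Lemma inv_cons s u : inv (s :: u) = inv u ++ [Neg s].
Proof. reflexivity. Qed.

Lemma length_pos u : length (pos u) = length u.
Proof. apply length_map. Qed.

Lemma length_inv u : length (inv u) = length u.
Proof. unfold inv. now rewrite length_rev, length_map. Qed.

Lemma rev_pos u : rev (pos u) = pos (rev u).
Proof. symmetry. apply map_rev. Qed.

Lemma rev_inv u : rev (inv u) = inv (rev u).
Proof. unfold inv. now rewrite map_rev, !rev_involutive. Qed.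

Lemma rev_neq_nil (l : list S) : l <> [] -> rev l <> [].
Proof. intros Hl E. apply Hl, rev_inj, E. Qed.

Lemma Pos_notin_inv s u : ~ In (Pos s) (inv u).
Proof. unfold inv. rewrite <- in_rev, in_map_iff. now intros [t [E _]]. Qed.

Lemma inv_inj b d : inv b = inv d -> b = d.
Proof.
  revert d. induction b as [|s b IH]; intros [|t d] E; rewrite ?inv_cons in E; try reflexivity.
  1, 2: apply (f_equal (@length _)) in E; rewrite length_app in E; simpl in E; lia.
  apply app_inj_tail in E as [E1 E2]. injection E2 as ->. now rewrite (IH d E1).
Qed.

Lemma pos_inv_inj a b c d : pos a ++ inv b = pos c ++ inv d -> a = c /\ b = d.
Proof.
  revert c. induction a as [|s a IH]; intros [|t c] E; simpl in E.
  - split; [reflexivity|]. now apply inv_inj.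
  - exfalso. apply (Pos_notin_inv t b). rewrite E. now left.
  - exfalso. apply (Pos_notin_inv s d). rewrite <- E. now left.
  - injection E as -> E. apply IH in E as [-> ->]. now split.
Qed.

Lemma pos_inv_no_Neg_Pos a b x y s t : pos a ++ inv b <> x ++ Neg s :: Pos t :: y.
Proof.
  revert x. induction a as [|r a IH]; intros x E; simpl in E.
  - apply (Pos_notin_inv t b). rewrite E. apply in_app_iff. right. right. now left.
  - destruct x as [|l x]; injection E as E1 E2; [discriminate|]. exact (IH x E2).
Qed.

End Words.

Section Presentation.
Variable S : Type.
Variable R : list S -> list S -> Prop.
Implicit Types (a b c d u v : list S) (w x y : sword S).
Notation peq := (pequiv R).

Lemma is_rel_sym u v : is_rel R u v -> is_rel R v u.
Proof. unfold is_rel. tauto. Qed.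

Lemma pequiv_of_rel u v : is_rel R u v -> peq u v.
Proof. intros H. generalize (pequiv_rel [] [] H). now rewrite !app_nil_r. Qed.

Lemma pequiv_app_r u v z : peq u v -> peq (u ++ z) (v ++ z).
Proof.
  induction 1; [apply pequiv_refl | now apply pequiv_sym | eapply pequiv_trans; eauto |].
  rewrite <- !app_assoc. now apply pequiv_rel.
Qed.

Lemma pequiv_app_l u v z : peq u v -> peq (z ++ u) (z ++ v).
Proof.
  induction 1; [apply pequiv_refl | now apply pequiv_sym | eapply pequiv_trans; eauto |].
  rewrite !(app_assoc z). now apply pequiv_rel.
Qed.

Lemma pequiv_app u v u' v' : peq u u' -> peq v v' -> peq (u ++ v) (u' ++ v').
Proof.
  intros. eapply pequiv_trans; [apply pequiv_app_r | apply pequiv_app_l]; eassumption.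
Qed.

Lemma pequiv_nil_iff (Hpos : positive_relations R) u v : peq u v -> u = [] <-> v = [].
Proof.
  induction 1 as [| | |x y u v H]; try tauto.
  assert (u <> [] /\ v <> []) as [Hu Hv] by (destruct H as [H|H]; apply Hpos in H; tauto).
  split; intros E; apply app_eq_nil in E as [_ E]; apply app_eq_nil in E as [E _]; tauto.
Qed.

Inductive rrevn : nat -> sword S -> sword S -> Prop :=
| rrevn_refl w : rrevn 0 w w
| rrevn_cons k w1 w2 w3 : rrev_step R w1 w2 -> rrevn k w2 w3 -> rrevn (Datatypes.S k) w1 w3.

Lemma rrevn_of_rrev w w' : rrev R w w' -> exists k, rrevn k w w'.
Proof.
  induction 1 as [w|w1 w2 w3 Hs _ [k Hk]]; [exists 0 | exists (Datatypes.S k)]; econstructor; eauto.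
Qed.

Lemma rrev_of_rrevn k w w' : rrevn k w w' -> rrev R w w'.
Proof. induction 1; econstructor; eauto. Qed.

Lemma rrevn_trans k1 k2 w1 w2 w3 : rrevn k1 w1 w2 -> rrevn k2 w2 w3 -> rrevn (k1 + k2) w1 w3.
Proof. induction 1; intros; simpl; [assumption | econstructor; eauto]. Qed.

Lemma rrev_step_ctx (l r : sword S) w w' : rrev_step R w w' -> rrev_step R (l ++ w ++ r) (l ++ w' ++ r).
Proof.
  destruct 1 as [x y u Hu | x y u v u' v' Hu Hv Hr].
  - generalize (rrev_del R (l ++ x) (y ++ r) Hu). now rewrite <- !app_assoc.
  - generalize (rrev_sw (l ++ x) (y ++ r) u' v' Hu Hv Hr). now rewrite <- !app_assoc.
Qed.

Lemma rrevn_ctx (l r : sword S) k w w' : rrevn k w w' -> rrevn k (l ++ w ++ r) (l ++ w' ++ r).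
Proof. induction 1; econstructor; eauto using rrev_step_ctx. Qed.

Lemma rrev_step_Neg_Pos w w' : rrev_step R w w' -> exists l r s t, w = l ++ Neg s :: Pos t :: r.
Proof.
  destruct 1 as [x y u Hu | x y u v u' v' Hu Hv _];
    destruct u as [|s u]; try congruence; [exists (x ++ inv u), (pos u ++ y), s, s
    | destruct v as [|t v]; try congruence; exists (x ++ inv u), (pos v ++ y), s, t];
    rewrite inv_cons, <- !app_assoc; reflexivity.
Qed.

Lemma rrev_pos_inv a b w : rrev R (pos a ++ inv b) w -> w = pos a ++ inv b.
Proof.
  inversion 1 as [|? w2 ? Hs]; [reflexivity|].
  apply rrev_step_Neg_Pos in Hs as (l & r & s & t & E).
  now apply pos_inv_no_Neg_Pos in E.
Qed.

Lemma rrev_step_source_pair x y u v s t : u <> [] -> v <> [] ->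
  x ++ inv u ++ pos v ++ y = [Neg s; Pos t] -> x = [] /\ y = [] /\ u = [s] /\ v = [t].
Proof.
  intros Hu Hv E.
  assert (L := f_equal (@length _) E). rewrite !length_app, length_inv, length_pos in L.
  destruct u as [|s' [|]], v as [|t' [|]], x, y; simpl in L; try congruence; try lia.
  injection E as -> ->. now repeat split.
Qed.

Lemma rrev_Neg_Pos_same (HC : cond_C R) s a b : rrev R [Neg s; Pos s] (pos a ++ inv b) -> a = b.
Proof.
  inversion 1 as [w E | w1 w2 w3 Hs Hr].
  - exfalso. now apply (pos_inv_no_Neg_Pos a b [] [] s s).
  - inversion Hs as [x y u Hu E1 E2 | x y u v u' v' Hu Hv Hrel E1 E2]; subst.
    + apply rrev_step_source_pair in E1 as (-> & -> & -> & _); auto.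
      apply (rrev_pos_inv [] []), pos_inv_inj in Hr as [-> ->]. reflexivity.
    + apply rrev_step_source_pair in E1 as (-> & -> & -> & ->); auto.
      simpl in Hr. rewrite app_nil_r in Hr.
      apply rrev_pos_inv, pos_inv_inj in Hr as [-> ->].
      apply NNPP. intros Hne. exact (proj1 (HC s v' u' Hne) Hrel).
Qed.

Lemma pequiv_cancel_l (Hrc : r_complete R) (HC : cond_C R) a u v : peq (a ++ u) (a ++ v) -> peq u v.
Proof.
  induction a as [|s a IH]; [easy|]. intros H. apply IH.
  destruct (Hrc [s] [s] _ _ H) as (u'' & v'' & z & Hr & E1 & E2).
  apply rrev_Neg_Pos_same in Hr as ->; [|assumption].
  eapply pequiv_trans; [exact E2 | now apply pequiv_sym].
Qed.

End Presentation.

Section Opposite.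
Variable S : Type.
Variable R : list S -> list S -> Prop.
Implicit Types (a u v : list S) (w : sword S).

Definition opp_rel u v : Prop := R (rev u) (rev v).

Lemma is_rel_opp u v : is_rel R u v -> is_rel opp_rel (rev u) (rev v).
Proof. unfold is_rel, opp_rel. now rewrite !rev_involutive. Qed.

Lemma rrev_opp_of_lrev w w' : lrev R w w' -> rrev opp_rel (rev w) (rev w').
Proof.
  induction 1 as [w|w1 w2 w3 Hs _ IH]; [apply rrev_refl|].
  apply rrev_cons with (rev w2); [|exact IH].
  destruct Hs as [x y u Hu | x y u v u' v' Hu Hv Hr];
    rewrite !rev_app_distr, !rev_pos, !rev_inv, <- !app_assoc.
  - apply rrev_del, rev_neq_nil, Hu.
  - apply rrev_sw; [apply rev_neq_nil, Hv | apply rev_neq_nil, Hu |].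
    apply is_rel_opp in Hr. rewrite !rev_app_distr in Hr. now apply is_rel_sym.
Qed.

Lemma cond_C_opp : cond_C R -> cond_C opp_rel.
Proof.
  intros HC s u v Hne. unfold is_rel, opp_rel. rewrite !rev_app_distr. simpl.
  assert (Hne' : rev u <> rev v) by (intros E; now apply rev_inj in E).
  destruct (HC s _ _ Hne') as [H1 H2]. unfold is_rel in H1, H2. tauto.
Qed.

Lemma pequiv_cancel_r (Hlc : l_complete R) (HC : cond_C R) a u v :
  pequiv R (u ++ a) (v ++ a) -> pequiv R u v.
Proof.
  revert u v. induction a as [|s a IH] using rev_ind; intros u v H.
  { now rewrite !app_nil_r in H. }
  rewrite !app_assoc in H. apply IH.
  destruct (Hlc [s] [s] _ _ H) as (u'' & v'' & z & Hl & E1 & E2).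
  apply rrev_opp_of_lrev in Hl. rewrite !rev_app_distr, !rev_pos, !rev_inv in Hl.
  apply (rrev_Neg_Pos_same (cond_C_opp HC)), rev_inj in Hl as ->.
  eapply pequiv_trans; [exact E2 | now apply pequiv_sym].
Qed.

End Opposite.

Section Fractions.
Variable S : Type.
Variable R : list S -> list S -> Prop.
Implicit Types (a b u v z : list S) (w x y : sword S).
Notation peq := (pequiv R).

(* [is_frac w a b] reads [w] from left to right as the fraction [a b^-1]: a
   positive letter is split off the left of the numerator, a negative letter is
   pushed onto it. *)
Fixpoint is_frac w a b : Prop :=
  match w with
  | [] => peq a b
  | Pos s :: w' => exists a1, peq a (s :: a1) /\ is_frac w' a1 b
  | Neg s :: w' => is_frac w' (s :: a) b
  end.

Lemma is_frac_pequiv_l w a a' b : peq a a' -> is_frac w a b -> is_frac w a' b.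
Proof.
  revert a a'. induction w as [|[s|s] w IH]; intros a a' E H; simpl in *.
  - eapply pequiv_trans; [apply pequiv_sym|]; eassumption.
  - destruct H as (a1 & H1 & H2). exists a1. split; [|assumption].
    eapply pequiv_trans; [apply pequiv_sym|]; eassumption.
  - apply (IH (s :: a)); [now apply (pequiv_app_l [s])|assumption].
Qed.

Lemma is_frac_app_r w a b z : is_frac w a b -> is_frac w (a ++ z) (b ++ z).
Proof.
  revert a. induction w as [|[s|s] w IH]; intros a H; simpl in *.
  - now apply pequiv_app_r.
  - destruct H as (a1 & H1 & H2). exists (a1 ++ z). split; [|auto].
    now apply (pequiv_app_r z) in H1.
  - exact (IH (s :: a) H).
Qed.

Lemma is_frac_inv u y a b : is_frac (inv u ++ y) a b <-> is_frac y (u ++ a) b.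
Proof.
  revert y a. induction u as [|s u IH]; intros y a; [reflexivity|].
  rewrite inv_cons, <- app_assoc, IH. reflexivity.
Qed.

Lemma is_frac_pos v y a b :
  is_frac (pos v ++ y) a b <-> exists a1, peq a (v ++ a1) /\ is_frac y a1 b.
Proof.
  revert a. induction v as [|s v IH]; intros a; simpl.
  - split; [intros H; exists a; split; [apply pequiv_refl|assumption]|].
    intros (a1 & H1 & H2). eapply is_frac_pequiv_l; [apply pequiv_sym|]; eassumption.
  - setoid_rewrite IH. split.
    + intros (a1 & H1 & a2 & H2 & H3). exists a2. split; [|assumption].
      eapply pequiv_trans; [eassumption|]. now apply (pequiv_app_l [s]).
    + intros (a2 & H1 & H2). exists (v ++ a2).
      split; [assumption|]. exists a2. split; [apply pequiv_refl|assumption].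
Qed.

Lemma is_frac_pos_inv v u : is_frac (pos v ++ inv u) v u.
Proof.
  apply is_frac_pos. exists []. rewrite app_nil_r. split; [apply pequiv_refl|].
  rewrite <- (app_nil_r (inv u)), is_frac_inv, app_nil_r. apply pequiv_refl.
Qed.

Lemma is_frac_ctx x y y' :
  (forall a b, is_frac y' a b -> is_frac y a b) ->
  forall a b, is_frac (x ++ y') a b -> is_frac (x ++ y) a b.
Proof.
  intros H. induction x as [|[s|s] x IH]; intros a b Hx; simpl in *; auto.
  destruct Hx as (a1 & H1 & H2). eauto.
Qed.

Lemma is_frac_rrev w w' : rrev R w w' -> forall a b, is_frac w' a b -> is_frac w a b.
Proof.
  induction 1 as [|w1 w2 w3 Hs _ IH]; [easy|]. intros a b H. specialize (IH a b H). clear H.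
  revert a b IH. destruct Hs as [x y u Hu | x y u v u' v' Hu Hv Hr]; apply is_frac_ctx.
  - intros a b H. apply is_frac_inv, is_frac_pos. exists a. split; [apply pequiv_refl|assumption].
  - intros a b H. apply is_frac_pos in H as (a1 & H1 & H2). apply is_frac_inv in H2.
    apply is_frac_inv, is_frac_pos. exists (u' ++ a1). split; [|assumption].
    eapply pequiv_trans; [apply pequiv_app_l; exact H1|].
    rewrite !app_assoc. apply pequiv_app_r, pequiv_of_rel, Hr.
Qed.

Lemma pequiv_of_rrev_nil u v : rrev R (inv u ++ pos v) [] -> peq u v.
Proof.
  intros H. assert (Hf : is_frac (inv u ++ pos v) [] []) by (apply (is_frac_rrev H), pequiv_refl).
  rewrite is_frac_inv, <- (app_nil_r (pos v)), is_frac_pos in Hf. destruct Hf as (a1 & H1 & H2).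
  rewrite app_nil_r in H1. eapply pequiv_trans; [exact H1|].
  rewrite <- (app_nil_r v) at 2. now apply pequiv_app_l.
Qed.

End Fractions.

Section Ore.
Variable S : Type.
Variable R : list S -> list S -> Prop.
Implicit Types (a b c d u v : list S) (w x y : sword S).
Notation peq := (pequiv R).
Hypothesis cancel_l : forall a u v, peq (a ++ u) (a ++ v) -> peq u v.
Hypothesis cancel_r : forall a u v, peq (u ++ a) (v ++ a) -> peq u v.
Hypothesis common_multiple : forall u v, exists c d, peq (u ++ d) (v ++ c).

Definition frac_eq a b a' b' := exists c d, peq (a ++ c) (a' ++ d) /\ peq (b ++ c) (b' ++ d).

Definition same_frac w w' :=
  forall a b a' b', is_frac R w a b -> is_frac R w' a' b' -> frac_eq a b a' b'.

Lemma is_frac_total w : exists a b, is_frac R w a b.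
Proof.
  induction w as [|[s|s] w (a & b & H)].
  - exists [], []. apply pequiv_refl.
  - exists (s :: a), b, a. split; [apply pequiv_refl | exact H].
  - destruct (common_multiple [s] a) as (c & d & E). exists d, (b ++ c).
    simpl. eapply is_frac_pequiv_l; [apply pequiv_sym, E | apply is_frac_app_r, H].
Qed.

Lemma frac_eq_sym a b a' b' : frac_eq a b a' b' -> frac_eq a' b' a b.
Proof. intros (c & d & H1 & H2). exists d, c. split; now apply pequiv_sym. Qed.

Lemma frac_eq_trans a b a' b' a'' b'' :
  frac_eq a b a' b' -> frac_eq a' b' a'' b'' -> frac_eq a b a'' b''.
Proof.
  intros (c & d & H1 & H2) (c' & d' & H3 & H4).
  destruct (common_multiple d c') as (e' & e & E).
  assert (Hstep : forall p q r : list S, peq (p ++ c) (q ++ d) -> peq (q ++ c') (r ++ d') ->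
    peq (p ++ c ++ e) (r ++ d' ++ e')).
  { intros p q r Hp Hq. rewrite !app_assoc.
    eapply pequiv_trans; [apply pequiv_app_r, Hp|]. rewrite <- app_assoc.
    eapply pequiv_trans; [apply pequiv_app_l, E|]. rewrite app_assoc. apply pequiv_app_r, Hq. }
  exists (c ++ e), (d' ++ e'). split; eapply Hstep; eassumption.
Qed.

Lemma same_frac_nil : same_frac [] [].
Proof.
  intros a b a' b' H H'. simpl in H, H'. destruct (common_multiple a a') as (c & d & E).
  exists d, c. split; [exact E|].
  eapply pequiv_trans; [apply pequiv_app_r, pequiv_sym, H|].
  eapply pequiv_trans; [exact E|]. apply pequiv_app_r, H'.
Qed.

Lemma same_frac_app_l x y y' : same_frac y y' -> same_frac (x ++ y) (x ++ y').
Proof.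
  intros Hy. induction x as [|[s|s] x IH]; [assumption| |]; intros a b a' b' H H'; simpl in H, H'.
  - destruct H as (a1 & H1 & H2), H' as (a1' & H1' & H2').
    destruct (IH _ _ _ _ H2 H2') as (c & d & E1 & E2). exists c, d. split; [|exact E2].
    eapply pequiv_trans; [apply pequiv_app_r, H1|].
    eapply pequiv_trans; [|apply pequiv_app_r, pequiv_sym, H1'].
    now apply (pequiv_app_l [s]).
  - destruct (IH _ _ _ _ H H') as (c & d & E1 & E2). exists c, d. split; [|exact E2].
    now apply (cancel_l [s]).
Qed.

Lemma same_frac_refl w : same_frac w w.
Proof. rewrite <- (app_nil_r w). apply same_frac_app_l, same_frac_nil. Qed.

Lemma same_frac_sym w w' : same_frac w w' -> same_frac w' w.
Proof. intros H a b a' b' H1 H2. apply frac_eq_sym. eauto. Qed.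

Lemma same_frac_trans w1 w2 w3 : same_frac w1 w2 -> same_frac w2 w3 -> same_frac w1 w3.
Proof.
  intros H12 H23 a b a' b' H1 H3. destruct (is_frac_total w2) as (c & d & H2).
  eapply frac_eq_trans; [apply H12 | apply H23]; eassumption.
Qed.

Lemma same_frac_pos u v y : peq u v -> same_frac (pos u ++ y) (pos v ++ y).
Proof.
  intros E a b a' b' H H'. apply is_frac_pos in H as (a1 & H1 & H2), H' as (a1' & H1' & H2').
  destruct (same_frac_refl y _ _ _ _ H2 H2') as (c & d & E1 & E2). exists c, d. split; [|exact E2].
  eapply pequiv_trans; [apply pequiv_app_r, H1|].
  eapply pequiv_trans; [|apply pequiv_app_r, pequiv_sym, H1'].
  rewrite <- !app_assoc. now apply pequiv_app.
Qed.

Lemma same_frac_Pos_Neg s y : same_frac ([Pos s; Neg s] ++ y) y.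
Proof.
  intros a b a' b' (a1 & H1 & H2) H'.
  destruct (same_frac_refl y _ _ _ _ H2 H') as (c & d & E1 & E2). exists c, d. split; [|exact E2].
  eapply pequiv_trans; [apply pequiv_app_r, H1 | exact E1].
Qed.

Lemma same_frac_Neg_Pos s y : same_frac ([Neg s; Pos s] ++ y) y.
Proof.
  intros a b a' b' (a1 & H1 & H2) H'. apply (cancel_l [s]) in H1.
  destruct (same_frac_refl y _ _ _ _ H2 H') as (c & d & E1 & E2). exists c, d. split; [|exact E2].
  eapply pequiv_trans; [apply pequiv_app_r, H1 | exact E1].
Qed.

Lemma same_frac_of_gequiv w w' : gequiv R w w' -> same_frac w w'.
Proof.
  induction 1.
  - apply same_frac_refl.
  - now apply same_frac_sym.
  - eapply same_frac_trans; eassumption.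
  - apply same_frac_app_l, same_frac_pos, pequiv_of_rel. assumption.
  - apply same_frac_app_l, same_frac_Pos_Neg.
  - apply same_frac_app_l, same_frac_Neg_Pos.
Qed.

Lemma pequiv_of_gequiv_nil {w a b} : gequiv R w [] -> is_frac R w a b -> peq a b.
Proof.
  intros G H.
  destruct (same_frac_of_gequiv G _ _ _ _ H (pequiv_refl R [])) as (c & d & E1 & E2).
  apply (cancel_r c). eapply pequiv_trans; [exact E1 | now apply pequiv_sym].
Qed.

End Ore.

Lemma concat_map_singleton A (u : list A) : concat (map (fun s => [s]) u) = u.
Proof. induction u; simpl; congruence. Qed.

Section CommonMultiples.
Variable S : Type.
Variable R : list S -> list S -> Prop.
Implicit Types (a b c d u v : list S).
Notation peq := (pequiv R).
Variable X : list S -> Prop.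
Hypothesis X_letter : forall s, X [s].
Hypothesis X_square : forall u v, X u -> X v ->
  exists u' v', X u' /\ X v' /\ peq (u ++ v') (v ++ u').

Lemma common_multiple_row B : Forall X B -> forall a, X a ->
  exists a' B', X a' /\ Forall X B' /\ peq (a ++ concat B') (concat B ++ a').
Proof.
  induction 1 as [|b B Hb _ IH]; intros a Ha.
  - exists a, []. simpl. rewrite app_nil_r. repeat split; auto using pequiv_refl.
  - destruct (X_square Ha Hb) as (a1 & b1 & Ha1 & Hb1 & E1).
    destruct (IH a1 Ha1) as (a2 & B2 & Ha2 & HB2 & E2).
    exists a2, (b1 :: B2). repeat split; auto. simpl.
    rewrite app_assoc. eapply pequiv_trans; [apply pequiv_app_r, E1|].
    rewrite <- !app_assoc. apply pequiv_app_l, E2.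
Qed.

Lemma common_multiple_grid A : Forall X A -> forall B, Forall X B ->
  exists A' B', peq (concat A ++ concat B') (concat B ++ concat A').
Proof.
  induction 1 as [|a A Ha _ IH]; intros B HB.
  - exists [], B. rewrite app_nil_r. apply pequiv_refl.
  - destruct (common_multiple_row HB Ha) as (a1 & B1 & Ha1 & HB1 & E1).
    destruct (IH B1 HB1) as (A2 & B2 & E2).
    exists (a1 :: A2), B2. simpl. rewrite <- app_assoc.
    eapply pequiv_trans; [apply pequiv_app_l, E2|].
    rewrite !app_assoc. apply pequiv_app_r, E1.
Qed.

Lemma common_multiple_words u v : exists c d, peq (u ++ d) (v ++ c).
Proof.
  assert (HX : forall w, Forall X (map (fun s => [s]) w)).
  { intros w. apply Forall_map, Forall_forall. auto. }
  destruct (common_multiple_grid (HX u) (HX v)) as (A & B & E).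
  rewrite !concat_map_singleton in E. eauto.
Qed.

End CommonMultiples.

Lemma common_multiple_of_Er S (R : list S -> list S -> Prop) :
  cond_Er R -> forall u v, exists c d, pequiv R (u ++ d) (v ++ c).
Proof.
  intros (X & HX & Hsq). apply (@common_multiple_words S R X HX).
  intros u v Hu Hv. destruct (Hsq u v Hu Hv) as (u' & v' & Hu' & Hv' & Hr).
  exists u', v'. repeat split; auto. now apply pequiv_of_rrev_nil.
Qed.

Section Derivations.
Variable S : Type.
Variable R : list S -> list S -> Prop.
Implicit Types (u v : list S) (w x y t : sword S).

Lemma derives_del_pos_inv k x y u t : derives R k (x ++ y) t -> derives R k (x ++ pos u ++ inv u ++ y) t.
Proof.
  revert x y. induction u as [|s u IH]; intros x y H; [exact H|].
  assert (H1 := der_free_del1 x y s H).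
  replace (x ++ [Pos s; Neg s] ++ y) with ((x ++ [Pos s]) ++ Neg s :: y) in H1 by now rewrite <- app_assoc.
  generalize (IH _ _ H1). rewrite inv_cons, <- !app_assoc. easy.
Qed.

Lemma derives_ins_pos_inv k x y u t : derives R k (x ++ pos u ++ inv u ++ y) t -> derives R k (x ++ y) t.
Proof.
  revert x y. induction u as [|s u IH]; intros x y H; [exact H|].
  apply (der_free_ins1 x y s).
  replace (x ++ [Pos s; Neg s] ++ y) with ((x ++ [Pos s]) ++ Neg s :: y) by now rewrite <- app_assoc.
  apply IH. revert H. rewrite inv_cons, <- !app_assoc. easy.
Qed.

Lemma derives_del_inv_pos k x y u t : derives R k (x ++ y) t -> derives R k (x ++ inv u ++ pos u ++ y) t.
Proof.
  revert x y. induction u as [|s u IH]; intros x y H; [exact H|].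
  assert (H1 := IH x y H). rewrite app_assoc in H1.
  generalize (der_free_del2 _ _ s H1).
  rewrite inv_cons, <- !app_assoc. easy.
Qed.

Lemma derives_of_rrev_step w w' m t : rrev_step R w w' -> derives R m w' t ->
  derives R m w t \/ derives R (Datatypes.S m) w t.
Proof.
  destruct 1 as [x y u Hu | x y u v u' v' Hu Hv Hr]; intros H; [left; now apply derives_del_inv_pos|right].
  apply (derives_del_inv_pos x (pos v' ++ inv u' ++ y) u) in H.
  replace (x ++ inv u ++ pos u ++ pos v' ++ inv u' ++ y) with ((x ++ inv u) ++ pos (u ++ v') ++ inv u' ++ y)
    in H by (rewrite pos_app, <- !app_assoc; reflexivity).
  apply (der_rel _ _ (is_rel_sym Hr)) in H.
  replace (x ++ inv u ++ pos v ++ y) with ((x ++ inv u ++ pos v) ++ y) by now rewrite <- !app_assoc.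
  apply (derives_ins_pos_inv _ y u'). rewrite pos_app, <- !app_assoc in *. exact H.
Qed.

Lemma derives_of_rrevn {k w w' m t} : rrevn R k w w' -> derives R m w' t ->
  exists j, j <= k /\ derives R (j + m) w t.
Proof.
  induction 1 as [|k w1 w2 w3 Hs _ IH]; intros H; [now exists 0|].
  destruct (IH H) as (j & Hj & Hd).
  destruct (derives_of_rrev_step Hs Hd); [exists j | exists (Datatypes.S j)]; split; auto with arith.
Qed.

Lemma derives_of_rrevn_nil {k u v} : rrevn R k (inv u ++ pos v) [] ->
  exists j, j <= k /\ derives R j (pos v ++ inv u) [].
Proof.
  intros H. apply (rrevn_ctx (pos u) (inv u)) in H.
  assert (D : derives R 0 (pos u ++ inv u) []).
  { generalize (derives_del_pos_inv [] [] u (der_refl R [])). now rewrite app_nil_r. }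
  destruct (derives_of_rrevn H D) as (j & Hj & Dj). exists j. split; [exact Hj|].
  apply (derives_ins_pos_inv [] _ u). rewrite <- !app_assoc, Nat.add_0_r in Dj. exact Dj.
Qed.

End Derivations.

Lemma bounded_witnesses A (l : list A) (P : A -> nat -> Prop) :
  exists N, forall x, In x l -> (exists k, P x k) -> exists k, k <= N /\ P x k.
Proof.
  induction l as [|x0 l [N IH]]; [exists 0; intros x []|].
  destruct (classic (exists k, P x0 k)) as [[k0 Hk0]|Hn].
  - exists (k0 + N). intros x [<-|Hx] Hk; [exists k0; split; [lia|exact Hk0]|].
    destruct (IH x Hx Hk) as (k & Hk1 & Hk2). exists k. split; [lia|exact Hk2].
  - exists N. intros x [<-|Hx] Hk; [contradiction|auto].
Qed.

Lemma rrev_closure_bound S (R : list S -> list S -> Prop) : cond_Fr R ->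
  exists N, forall a b a' b', rclosure R a -> rclosure R b ->
    rrev R (inv a ++ pos b) (pos b' ++ inv a') ->
    exists k, k <= N /\ rrevn R k (inv a ++ pos b) (pos b' ++ inv a').
Proof.
  intros [l Hl].
  destruct (bounded_witnesses (list_prod (list_prod (list_prod l l) l) l)
    (fun '(a, b, a', b') k => rrevn R k (inv a ++ pos b) (pos b' ++ inv a'))) as [N HN].
  exists N. intros a b a' b' Ha Hb Hr. apply (HN (a, b, a', b')).
  - repeat apply in_prod; apply Hl; eauto using rclos_num, rclos_den.
  - now apply rrevn_of_rrev.
Qed.

Ltac words_eq :=
  simpl; rewrite ?concat_app, ?pos_app, ?inv_app, ?app_nil_r, <- ?app_assoc; simpl; reflexivity.

(* Close a goal [rrevn R k w w'] with [H : rrevn R k v v'], where [w = v] and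
   [w' = v'] hold up to reassociation; [w'] may be an evar. *)
Ltac exact_rrevn H :=
  lazymatch type of H with rrevn _ _ ?v ?v' =>
  lazymatch goal with |- rrevn _ _ ?w ?w' =>
    replace w with v by words_eq;
    (tryif is_evar w' then idtac else replace w' with v' by words_eq);
    exact H
  end end.

Section ReversingGrid.
Variable S : Type.
Variable R : list S -> list S -> Prop.
Implicit Types (a b c d u v z : list S) (A B : list (list S)) (w : sword S).
Notation peq := (pequiv R).
Notation closed := (Forall (rclosure R)).
Hypothesis Hrc : r_complete R.
Variable N : nat.
Hypothesis HN : forall a b a' b', rclosure R a -> rclosure R b ->
  rrev R (inv a ++ pos b) (pos b' ++ inv a') ->
  exists k, k <= N /\ rrevn R k (inv a ++ pos b) (pos b' ++ inv a').

Lemma rrevn_row {a B c d} : rclosure R a -> closed B -> peq (a ++ d) (concat B ++ c) ->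
  exists a' B' z k, rclosure R a' /\ closed B' /\ length B' = length B /\ k <= N * length B /\
    rrevn R k (inv a ++ pos (concat B)) (pos (concat B') ++ inv a') /\
    peq c (a' ++ z) /\ peq d (concat B' ++ z).
Proof.
  intros Ha HB. revert a c d Ha. induction HB as [|b B Hb HB IH]; intros a c d Ha H.
  - exists a, [], d, 0. repeat split; auto using pequiv_refl, pequiv_sym, Nat.le_0_l.
    exact_rrevn (rrevn_refl R (inv a)).
  - simpl in H. rewrite <- app_assoc in H.
    destruct (Hrc a b _ _ H) as (u & v & z & Hr & E1 & E2).
    destruct (@HN a b u v Ha Hb Hr) as (k1 & Hk1 & Hr1).
    destruct (IH _ _ _ (rclos_num u v Ha Hb Hr) (pequiv_sym E1))
      as (a' & B' & z' & k2 & Ha' & HB' & HL & Hk2 & Hr2 & E3 & E4).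
    exists a', (v :: B'), z', (k1 + k2). repeat split; auto.
    + constructor; [exact (rclos_den u v Ha Hb Hr) | exact HB'].
    + simpl. congruence.
    + simpl. nia.
    + eapply rrevn_trans; [exact_rrevn (rrevn_ctx [] (pos (concat B)) Hr1)|].
      exact_rrevn (rrevn_ctx (pos v) [] Hr2).
    + simpl. rewrite <- app_assoc. eapply pequiv_trans; [exact E2 | now apply pequiv_app_l].
Qed.

Lemma rrevn_grid {A B c d} : closed A -> closed B -> peq (concat A ++ d) (concat B ++ c) ->
  exists A' B' z k, closed A' /\ closed B' /\ length A' = length A /\ length B' = length B /\
    k <= N * length A * length B /\
    rrevn R k (inv (concat A) ++ pos (concat B)) (pos (concat B') ++ inv (concat A')) /\
    peq c (concat A' ++ z) /\ peq d (concat B' ++ z).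
Proof.
  intros HA. revert B c d. induction HA as [|a A Ha HA IH]; intros B c d HB H.
  - exists [], B, c, 0. repeat split; auto using pequiv_refl, Nat.le_0_l. exact_rrevn (rrevn_refl R (pos (concat B))).
  - simpl in H. rewrite <- app_assoc in H.
    destruct (rrevn_row Ha HB H) as (a1 & B1 & z1 & k1 & Ha1 & HB1 & HL1 & Hk1 & Hr1 & E1 & E2).
    destruct (IH _ _ _ HB1 E2) as (A' & B' & z & k2 & HA' & HB' & HLA & HLB & Hk2 & Hr2 & E3 & E4).
    exists (a1 :: A'), B', z, (k1 + k2). repeat split; auto.
    + simpl. congruence.
    + congruence.
    + simpl. rewrite HL1 in Hk2. nia.
    + eapply rrevn_trans; [exact_rrevn (rrevn_ctx (inv (concat A)) [] Hr1)|].
      exact_rrevn (rrevn_ctx [] (inv a1) Hr2).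
    + simpl. rewrite <- app_assoc. eapply pequiv_trans; [exact E1 | now apply pequiv_app_l].
Qed.

Lemma rrevn_nil_of_pequiv (Hpos : positive_relations R) U V : closed U -> closed V ->
  peq (concat U) (concat V) ->
  exists k, k <= N * length U * length V /\ rrevn R k (inv (concat U) ++ pos (concat V)) [].
Proof.
  intros HU HV E. rewrite <- (app_nil_r (concat U)), <- (app_nil_r (concat V)) in E.
  destruct (rrevn_grid HU HV E) as (U' & V' & z & k & _ & _ & _ & _ & Hk & Hr & E1 & E2).
  apply (pequiv_nil_iff Hpos), proj1, app_eq_nil, proj1 in E1; [|reflexivity].
  apply (pequiv_nil_iff Hpos), proj1, app_eq_nil, proj1 in E2; [|reflexivity].
  exists k. split; [exact Hk|]. rewrite E1, E2 in Hr. exact Hr.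
Qed.

Hypothesis common_multiple : forall u v, exists c d, peq (u ++ d) (v ++ c).

Lemma rrevn_to_fraction w : exists V U k, closed V /\ closed U /\
  length V + length U = length w /\ k <= N * length w * length w /\
  rrevn R k w (pos (concat V) ++ inv (concat U)).
Proof.
  induction w as [|[s|s] w (V & U & k & HV & HU & HL & Hk & Hr)].
  - exists [], [], 0. repeat split; auto using Nat.le_0_l, rrevn_refl.
  - exists ([s] :: V), U, k. repeat split; auto using rclos_letter.
    + simpl. lia.
    + simpl. nia.
    + exact_rrevn (rrevn_ctx [Pos s] [] Hr).
  - destruct (common_multiple [s] (concat V)) as (c & d & E).
    assert (Hs : closed [[s]]) by (constructor; [apply rclos_letter | constructor]).
    destruct (rrevn_grid Hs HV E)
      as (A' & V' & z & k' & HA' & HV' & HLA & HLV & Hk' & Hr' & _).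
    exists V', (U ++ A'), (k + k'). repeat split; auto.
    + now apply Forall_app.
    + rewrite length_app. simpl in *. lia.
    + simpl in *. nia.
    + eapply rrevn_trans; [exact_rrevn (rrevn_ctx [Neg s] [] Hr)|].
      exact_rrevn (rrevn_ctx [] (inv (concat U)) Hr').
Qed.

End ReversingGrid.

Theorem proposition7p7 (S : Type) (R : list S -> list S -> Prop) :
  inhabited S ->
  positive_relations R ->
  complete R ->
  cond_Fr R ->
  cond_C R ->
  cond_Er R ->
  quadratic_isoperimetric R.
Proof.
  intros _ Hpos [Hrc Hlc] HF HC HE.
  pose proof (common_multiple_of_Er HE) as CM.
  destruct (rrev_closure_bound HF) as [N HN].
  exists (2 * N). intros w Hw.
  destruct (rrevn_to_fraction Hrc HN CM w) as (V & U & k1 & HV & HU & HL & Hk1 & Hr1).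
  assert (E : pequiv R (concat V) (concat U)).
  { apply (pequiv_of_gequiv_nil (pequiv_cancel_l Hrc HC) (pequiv_cancel_r Hlc HC) CM Hw).
    apply (is_frac_rrev (rrev_of_rrevn Hr1)), is_frac_pos_inv. }
  destruct (rrevn_nil_of_pequiv Hrc HN Hpos HU HV (pequiv_sym E)) as (k2 & Hk2 & Hr2).
  destruct (derives_of_rrevn_nil Hr2) as (j2 & Hj2 & D2).
  destruct (derives_of_rrevn Hr1 D2) as (j1 & Hj1 & D1).
  exists (j1 + j2). split; [exact D1|].
  assert (length U * length V <= length w * length w) by (apply Nat.mul_le_mono; lia).
  nia.
Qed.
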